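(* Let $\mathbf{K}$ be an algebraically closed field and let $f,g\in\mathrm{Aut}(\mathbb G_m^2)$ be two loxodromic automorphisms of the algebraic torus $\mathbb G_m^2$ over $\mathbf{K}$. Then $\mathrm{Per}(f)\cap\mathrm{Per}(g)\neq\emptyset$ if and only if $\mathrm{Per}(f)=\mathrm{Per}(g)$.
   Context: Every $\mathbf{K}$-automorphism of $\mathbb G_m^2$ has the form $(x,y)\mapsto(\alpha x^ay^b,\beta x^cy^d)$ with $\alpha,\beta\in\mathbf{K}^\times$ and $\begin{pmatrix}a&b\\c&d\end{pmatrix}\in\mathrm{GL}_2(\mathbf Z)$. An automorphism is loxodromic if its first dynamical degree $\lambda_1(f)=\lim_N((f^N)^*H\cdot H)^{1/N}$ (for $H$ ample on a projective completion) is $>1$. $\mathrm{Per}(f)$ is the set of periodic points of $f$. *)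

From Stdlib Require Import Reals.
From Coquelicot Require Import Rbar Lim_seq.
From HB Require Import structures.
From mathcomp Require Import all_boot all_order all_algebra.

Set Implicit Arguments.
Unset Strict Implicit.
Unset Printing Implicit Defensive.

Import GRing.Theory.
Local Open Scope ring_scope.

Definition in_torus (K : fieldType) (p : K * K) : Prop := p.1 != 0 /\ p.2 != 0.

(* An automorphism (x,y) |-> (alpha x^a y^b, beta x^c y^d) of G_m^2,
   with alpha, beta in K^x and [[a,b],[c,d]] in GL_2(Z). *)
Record torus_aut (K : fieldType) := TorusAut {
  ta_alpha : K;
  ta_beta : K;
  ta_mat : 'M[int]_2;
  ta_alpha_neq0 : ta_alpha != 0;
  ta_beta_neq0 : ta_beta != 0;
  ta_mat_GL : ta_mat \in unitmx
}.

Definition ta_fun (K : fieldType) (f : torus_aut K) (p : K * K) : K * K :=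
  let M := ta_mat f in
  (ta_alpha f * p.1 ^ (M 0 0) * p.2 ^ (M 0 1),
   ta_beta f * p.1 ^ (M 1 0) * p.2 ^ (M 1 1)).

Definition Per (K : fieldType) (f : torus_aut K) (p : K * K) : Prop :=
  in_torus p /\ exists n : nat, (0 < n)%N /\ iter n (ta_fun f) p = p.

(* Degree of f^N with respect to the ample class H = O(1,1) on the projective
   completion P^1 x P^1 of G_m^2:  (f^N)^* H . H.  The iterate f^N is again
   monomial with exponent matrix M^N, and for a monomial map with exponent
   matrix [[a,b],[c,d]] one has f^* H = O(|a|+|c|, |b|+|d|), so
   f^* H . H = |a| + |b| + |c| + |d|. *)
Definition deg_iter (K : fieldType) (f : torus_aut K) (N : nat) : nat :=
  let A := (ta_mat f) ^+ N in
  addn (addn (addn (absz (A 0 0)) (absz (A 0 1))) (absz (A 1 0))) (absz (A 1 1)).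

Definition lambda1 (K : fieldType) (f : torus_aut K) : Rbar :=
  Lim_seq (fun N : nat => Rpower (INR (deg_iter f N)) (Rinv (INR N))).

Definition loxodromic (K : fieldType) (f : torus_aut K) : Prop :=
  Rbar_lt (Rbar.Finite R1) (lambda1 f).

(** If no eigenvalue of the exponent matrix [M] of [f] is a root of unity,
    i.e. [det (M^N - 1) <> 0] for all [N >= 1], then [Per f] is a single coset
    [p * Tors] of the torsion subgroup of [G_m^2]: for a common period [N] of
    [p] and [q], the quotient [q / p] is fixed by the monomial map [M^N],
    hence is killed by [det (M^N - 1)] (multiply by the adjugate of
    [M^N - 1]); conversely [GL_2(Z)] permutes the [m]-torsion points, so it
    acts periodically on them.  Two cosets meeting in a point coincide, and
    [Per f] is nonempty because over an algebraically closed field [f] has a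
    fixed point.  Loxodromic maps satisfy the eigenvalue condition: if
    [det (M^N - 1) = 0] then, by Cayley-Hamilton, some power of [M] is
    [1 + E] with [E^2 = 0], so [M^n] grows linearly and [lambda_1 f <= 1]. *)

From Stdlib Require Import Reals Lra.
From Coquelicot Require Import Coquelicot.
From mathcomp Require Import all_boot all_order all_algebra.
From mathcomp Require Import ring zify.

Set Implicit Arguments.
Unset Strict Implicit.
Unset Printing Implicit Defensive.

Section RootGrowth.
Local Open Scope R_scope.

(* Stdlib's [ln] is [0] on nonpositive reals. *)
Lemma Rpower_0_l (y : R) : Rpower 0 y = 1.
Proof.
rewrite /Rpower /ln; case: Rlt_dec => [/Rlt_irrefl [] | _].
by rewrite Rmult_0_r exp_0.
Qed.

Lemma is_lim_seq_Rpower_linear (D : R) :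
  0 < D -> is_lim_seq (fun N => Rpower (D * INR N) (/ INR N)) 1.
Proof.
move=> D_gt0.
apply: (is_lim_seq_ext_loc (fun N => exp (/ INR N * ln D + ln (INR N) / INR N))).
  exists 1%nat => N N_ge1.
  have N_gt0 : 0 < INR N by apply: lt_0_INR; lia.
  by rewrite /Rpower ln_mult // Rmult_plus_distr_l [ln _ / _]Rmult_comm.
rewrite -exp_0; apply: is_lim_seq_continuous.
  exact/derivable_continuous_pt/derivable_pt_exp.
rewrite -(Rplus_0_l 0); apply: is_lim_seq_plus'.
  rewrite -(Rmult_0_l (ln D)); apply: (is_lim_seq_scal_r _ _ 0).
  change (Rbar.Finite 0) with (Rbar_inv p_infty).
  by apply: is_lim_seq_inv; [exact: is_lim_seq_INR | discriminate].
apply: (is_lim_comp_seq (fun y => ln y / y) INR p_infty 0).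
- exact: is_lim_div_ln_p.
- by exists 0%nat.
- exact: is_lim_seq_INR.
Qed.

Lemma Lim_seq_root_le1 (d : nat -> nat) (C : nat) :
  (forall N, (0 < N)%N -> (d N <= C * N)%N) ->
  Rbar_le (Lim_seq (fun N => Rpower (INR (d N)) (/ INR N))) 1.
Proof.
move=> d_le; set D := INR C + 1.
have D_ge1 : 1 <= D by rewrite /D; have := pos_INR C; lra.
have /is_lim_seq_unique <- : is_lim_seq (fun N => Rpower (D * INR N) (/ INR N)) 1.
  by apply: is_lim_seq_Rpower_linear; lra.
apply: Lim_seq_le_loc; exists 1%nat => N N_ge1.
have N_ge1' : 1 <= INR N by apply: (le_INR 1).
have inv_ge0 : 0 <= / INR N by apply/Rlt_le/Rinv_0_lt_compat; lra.
have := d_le N; case: (d N) => [_ | k dN_le].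
  rewrite Rpower_0_l -(Rpower_O (D * INR N)); last nra.
  by apply: Rle_Rpower; nra.
apply: Rle_Rpower_l => //; split; first exact/lt_0_INR/Nat.lt_0_succ.
have /leP/le_INR : (k.+1 <= C * N)%N by apply: dN_le; lia.
rewrite mult_INR /D; have := pos_INR C; nra.
Qed.
End RootGrowth.

Import GRing.Theory Num.Theory.
Local Open Scope ring_scope.

Lemma lift0_ord2 : lift 0 (0 : 'I_1) = 1 :> 'I_2. Proof. exact/val_inj. Qed.
Lemma lift1_ord2 : lift 1 (0 : 'I_1) = 0 :> 'I_2. Proof. exact/val_inj. Qed.

Lemma ord2P (i : 'I_2) : i = 0 \/ i = 1.
Proof. by case: i => [[|[|//]] ?]; [left | right]; apply/val_inj. Qed.

Lemma mx22P (R : Type) (A B : 'M[R]_2) :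
  A 0 0 = B 0 0 -> A 0 1 = B 0 1 -> A 1 0 = B 1 0 -> A 1 1 = B 1 1 -> A = B.
Proof.
by move=> ? ? ? ?; apply/matrixP => i j; case: (ord2P i) => ->; case: (ord2P j) => ->.
Qed.

Lemma mulmx22E (R : pzSemiRingType) (A B : 'M[R]_2) i j :
  (A *m B) i j = A i 0 * B 0 j + A i 1 * B 1 j.
Proof. by rewrite mxE !big_ord_recl big_ord0 addr0 lift0_ord2. Qed.

Lemma det_mx22 (R : comPzRingType) (A : 'M[R]_2) :
  \det A = A 0 0 * A 1 1 - A 0 1 * A 1 0.
Proof.
rewrite (expand_det_row _ 0) !big_ord_recl big_ord0 addr0 /cofactor !det_mx11 !mxE /=.
by rewrite !lift0_ord2 lift1_ord2 expr0 expr1 mul1r mulN1r mulrN.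
Qed.

Lemma mxtrace22 (R : pzSemiRingType) (A : 'M[R]_2) : \tr A = A 0 0 + A 1 1.
Proof. by rewrite /mxtrace !big_ord_recl big_ord0 addr0 lift0_ord2. Qed.

Lemma Cayley_Hamilton22 (R : comPzRingType) (A : 'M[R]_2) :
  A *m A = \tr A *: A - (\det A)%:M.
Proof. by apply: mx22P; rewrite !mulmx22E det_mx22 mxtrace22 !mxE /=; ring. Qed.

Lemma det_subr1_mx22 (R : comPzRingType) (A : 'M[R]_2) :
  \det (A - 1) = \det A - \tr A + 1.
Proof. by rewrite !det_mx22 mxtrace22 !mxE /=; ring. Qed.

Lemma det_unitmx_int n (A : 'M[int]_n) : A \in unitmx -> \det A = 1 \/ \det A = -1.
Proof. by rewrite unitmxE => /pred2P. Qed.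

Lemma unipotent_exprn (R : pzRingType) (E : R) q : E * E = 0 -> (1 + E) ^+ q = 1 + E *+ q.
Proof.
move=> E2; elim: q => [|q IHq]; first by rewrite expr0 mulr0n addr0.
by rewrite exprSr IHq mulrDl mul1r mulrDr mulr1 mulrnAl E2 mul0rn addr0 mulrS addrA.
Qed.

Lemma unipotent_power_mx22 (B : 'M[int]_2) : B \in unitmx -> \det (B - 1) = 0 ->
  exists2 k, (0 < k)%N & exists2 E, B ^+ k = 1 + E & E * E = 0.
Proof.
move=> B_unit; rewrite det_subr1_mx22 => detB1.
have CH := Cayley_Hamilton22 B; rewrite mulmxE in CH.
case: (det_unitmx_int B_unit) => detB; rewrite detB in detB1 CH.
- have trB : \tr B = 1 + 1 by apply/esym/eqP; rewrite -subr_eq0 -detB1 addrAC.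
  exists 1%N => //; exists (B - 1); first by rewrite expr1 addrC subrK.
  by rewrite -expr2 sqrrB1 expr2 CH trB scalerDl scale1r -mulr2n addrAC subrK subrr.
- have trB : \tr B = 0 by apply/eqP; rewrite -oppr_eq0 -detB1 addrAC addNr add0r.
  exists 2%N => //; exists 0; last by rewrite mulr0.
  by rewrite addr0 expr2 CH trB scale0r sub0r raddfN opprK.
Qed.

Definition mx_norm1 m n (A : 'M[int]_(m, n)) : nat := \sum_i \sum_j `|A i j|%N.

Lemma mx_norm1D m n (A B : 'M[int]_(m, n)) :
  (mx_norm1 (A + B) <= mx_norm1 A + mx_norm1 B)%N.
Proof.
rewrite /mx_norm1 -big_split leq_sum // => i _; rewrite -big_split leq_sum // => j _.
by rewrite mxE -lez_nat PoszD !abszE ler_normD.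
Qed.

Lemma mx_norm1Mn m n (A : 'M[int]_(m, n)) q : mx_norm1 (A *+ q) = (mx_norm1 A * q)%N.
Proof.
rewrite /mx_norm1 big_distrl; apply: eq_bigr => i _; rewrite big_distrl.
by apply: eq_bigr => j _; rewrite mulmxnE -mulr_natr abszM natz.
Qed.

Lemma mx_norm1_unipotent_power_growth n (M E : 'M[int]_n.+1) L :
  (0 < L)%N -> M ^+ L = 1 + E -> E * E = 0 ->
  exists C, forall m, (0 < m)%N -> (mx_norm1 (M ^+ m) <= C * m)%N.
Proof.
move=> L_gt0 ML E2.
pose T := (\sum_(r < L) (mx_norm1 (M ^+ r) + mx_norm1 (E * M ^+ r)))%N.
exists (T * 2)%N => m m_gt0.
have r_lt : (m %% L < L)%N by rewrite ltn_pmod.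
have T_ge : (mx_norm1 (M ^+ (m %% L)) + mx_norm1 (E * M ^+ (m %% L)) <= T)%N.
  by rewrite /T (bigD1 (Ordinal r_lt)) //= leq_addr.
have -> : M ^+ m = M ^+ (m %% L) + (E * M ^+ (m %% L)) *+ (m %/ L).
  rewrite {1}(divn_eq m L) exprD mulnC exprM ML unipotent_exprn //.
  by rewrite mulrDl mul1r mulrnAl.
have q_le : (m %/ L <= m)%N by rewrite leq_div.
apply: leq_trans (mx_norm1D _ _) _; rewrite mx_norm1Mn.
apply: (@leq_trans (T + T * m)); first by apply: leq_add; [|apply: leq_mul]; lia.
nia.
Qed.

Lemma deg_iterE (K : fieldType) (f : torus_aut K) N : deg_iter f N = mx_norm1 (ta_mat f ^+ N).
Proof. by rewrite /mx_norm1 !big_ord_recl !big_ord0 !addn0 lift0_ord2 !addnA. Qed.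

Section Torus.
Variable K : fieldType.
Implicit Types (p q z : K * K) (A B : 'M[int]_2).

Definition tmul p q : K * K := (p.1 * q.1, p.2 * q.2).
Definition tdiv q p : K * K := (q.1 / p.1, q.2 / p.2).
Definition monomial A p : K * K :=
  (p.1 ^ A 0 0 * p.2 ^ A 0 1, p.1 ^ A 1 0 * p.2 ^ A 1 1).

Lemma in_torus_tmul p q : in_torus p -> in_torus q -> in_torus (tmul p q).
Proof. by case=> ? ? [? ?]; split; rewrite /= mulf_neq0. Qed.

Lemma in_torus_tdiv q p : in_torus q -> in_torus p -> in_torus (tdiv q p).
Proof. by case=> ? ? [? ?]; split; rewrite /= mulf_neq0 ?invr_eq0. Qed.

Lemma in_torus_monomial A p : in_torus p -> in_torus (monomial A p).
Proof. by case=> ? ?; split; rewrite /= mulf_neq0 // expfz_neq0. Qed.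

Lemma tmulA p q z : tmul p (tmul q z) = tmul (tmul p q) z.
Proof. by rewrite /tmul /= !mulrA. Qed.

Lemma tmulC p q : tmul p q = tmul q p.
Proof. by rewrite /tmul mulrC [p.2 * _]mulrC. Qed.

Lemma tmul1 p : tmul (1, 1) p = p.
Proof. by case: p => ? ?; rewrite /tmul /= !mul1r. Qed.

Lemma tmulI z p q : in_torus z -> tmul p z = tmul q z -> p = q.
Proof.
case: p q => [? ?] [? ?] [z1 z2] [eq1 eq2].
by rewrite (mulIf z1 eq1) (mulIf z2 eq2).
Qed.

Lemma tdivK q p : in_torus p -> tmul p (tdiv q p) = q.
Proof. by case: p q => [? ?] [? ?] [? ?]; rewrite /tmul /= ![_ * (_ / _)]mulrC !divfK. Qed.

Lemma monomialM A B p : in_torus p -> monomial (A * B) p = monomial A (monomial B p).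
Proof.
case: p => p1 p2 [/= ? ?]; rewrite /monomial /= -!mulmxE !mulmx22E.
rewrite !expfzMl !exprz_exp !expfzDr // !(mulrC (B _ _)).
by congr (_, _); rewrite mulrACA.
Qed.

Lemma monomialD A B p :
  in_torus p -> monomial (A + B) p = tmul (monomial A p) (monomial B p).
Proof.
case: p => p1 p2 [/= ? ?]; rewrite /monomial /tmul /= !mxE !expfzDr //.
by congr (_, _); rewrite mulrACA.
Qed.

Lemma monomial_tmul A p q : monomial A (tmul p q) = tmul (monomial A p) (monomial A q).
Proof. by rewrite /monomial /tmul /= !expfzMl; congr (_, _); rewrite mulrACA. Qed.

Lemma monomial1 p : monomial 1 p = p.
Proof. by case: p => ? ?; rewrite /monomial /= !mxE /= expr1z expr0z mulr1 mul1r. Qed.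

Lemma monomial_scalar (k : int) p : monomial k%:M p = (p.1 ^ k, p.2 ^ k).
Proof.
by case: p => ? ?; rewrite /monomial /= !mxE /= !mulr1n !mulr0n expr0z mulr1 mul1r.
Qed.

Lemma monomial_id A : monomial A (1, 1) = (1, 1).
Proof. by rewrite /monomial /= !exp1rz mulr1. Qed.

Lemma monomial_inj A p q : A \is a GRing.unit -> in_torus p -> in_torus q ->
  monomial A p = monomial A q -> p = q.
Proof.
move=> A_unit p_tor q_tor eq_pq.
by rewrite -(monomial1 p) -(monomial1 q) -(mulVr A_unit) !monomialM // eq_pq.
Qed.
End Torus.

Section Iterates.
Variables (K : fieldType) (f : torus_aut K).

Lemma ta_mat_unit : ta_mat f \is a GRing.unit.
Proof. exact: ta_mat_GL. Qed.

Lemma in_torus_coefs : in_torus (ta_alpha f, ta_beta f).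
Proof. by split; [exact: ta_alpha_neq0 | exact: ta_beta_neq0]. Qed.

Lemma ta_funE p : ta_fun f p = tmul (ta_alpha f, ta_beta f) (monomial (ta_mat f) p).
Proof. by rewrite /ta_fun /tmul /monomial /= !mulrA. Qed.

Lemma iter_ta_fun n : exists2 c, in_torus c &
  forall p, in_torus p -> iter n (ta_fun f) p = tmul c (monomial (ta_mat f ^+ n) p).
Proof.
elim: n => [|n [c c_tor IHn]].
  by exists (1, 1) => [|p _]; [split; exact: oner_neq0 | rewrite expr0 monomial1 tmul1].
exists (tmul (ta_alpha f, ta_beta f) (monomial (ta_mat f) c)).
  by apply: in_torus_tmul; [exact: in_torus_coefs | exact: in_torus_monomial].
by move=> p p_tor; rewrite iterS IHn // ta_funE monomial_tmul -monomialM // -exprS tmulA.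
Qed.
End Iterates.

Lemma exists_exprn_eq_mod (B : 'M[int]_2) (m : nat) : (0 < m)%N ->
  exists i j, (i < j)%N /\ forall a b, ((B ^+ i) a b = (B ^+ j) a b %[mod m])%Z.
Proof.
move=> m_gt0.
have modz_absz (x : int) : `|(x %% m)%Z|%N = (x %% m)%Z :> int.
  by rewrite abszE ger0_norm // modz_ge0 //; lia.
have res_lt (x : int) : (`|(x %% m)%Z| < m)%N.
  by rewrite -ltz_nat modz_absz ltz_pmod //; lia.
pose res (k : 'I_(m ^ 4).+1) : {ffun 'I_2 * 'I_2 -> 'I_m} :=
  [ffun ab => Ordinal (res_lt ((B ^+ k) ab.1 ab.2))].
have /injectivePn [i [j i_neq_j res_ij]] : ~~ injectiveb res.
  by apply/injectiveP => /leq_card; rewrite card_ffun card_prod !card_ord ltnn.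
have mod_ij a b : ((B ^+ i) a b = (B ^+ j) a b %[mod m])%Z.
  move/ffunP/(_ (a, b)): res_ij; rewrite !ffunE => /(congr1 val) /= /(congr1 Posz).
  by rewrite !modz_absz.
case: (ltngtP i j) => [lt_ij | lt_ji | /val_inj eq_ij]; first by exists i, j.
  by exists j, i; split => // a b; rewrite mod_ij.
by rewrite eq_ij eqxx in i_neq_j.
Qed.

Section Torsion.
Variable K : fieldType.
Implicit Types (z : K * K) (B : 'M[int]_2).

Definition torsion z := exists2 m, (0 < m)%N & z.1 ^+ m = 1 /\ z.2 ^+ m = 1.

Lemma exprz_absz_eq1 (x : K) (D : int) : x ^ D = 1 -> x ^+ `|D|%N = 1.
Proof. by case: D => n //= /eqP; rewrite invr_eq1 => /eqP. Qed.

Lemma exprz_eq_mod (x : K) (m : nat) (a b : int) :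
  x != 0 -> x ^+ m = 1 -> (a = b %[mod m])%Z -> x ^ a = x ^ b.
Proof.
move=> x_neq0 xm1 ab_mod.
have reduce c : x ^ c = x ^ (c %% m)%Z.
  rewrite {1}(divz_eq c m) expfzDr // (mulrC (c %/ m)%Z) -exprz_exp.
  have -> : x ^ m%:Z = x ^+ m by [].
  by rewrite xm1 exp1rz mul1r.
by rewrite reduce ab_mod -reduce.
Qed.

Lemma monomial_eq_mod (m : nat) (A B : 'M[int]_2) z : in_torus z ->
  z.1 ^+ m = 1 -> z.2 ^+ m = 1 -> (forall a b, (A a b = B a b %[mod m])%Z) ->
  monomial A z = monomial B z.
Proof.
case: z => z1 z2 [/= z1_neq0 z2_neq0] z1m z2m AB.
by rewrite /monomial /=; congr (_ * _, _ * _); apply: (exprz_eq_mod _ _ (AB _ _)).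
Qed.

Lemma monomial_fixed_torsion B z :
  in_torus z -> \det (B - 1) != 0 -> monomial B z = z -> torsion z.
Proof.
move=> z_tor det_neq0 Bz.
have : tmul (monomial (B - 1) z) (monomial 1 z) = tmul (1, 1) z.
  by rewrite -monomialD // subrK tmul1.
rewrite monomial1 => /(tmulI z_tor) B1z.
have := monomialM (\adj (B - 1)) (B - 1) z_tor.
rewrite B1z monomial_id -mulmxE mul_adj_mx monomial_scalar => -[/esym z1D /esym z2D].
exists `|\det (B - 1)|%N; first by rewrite absz_gt0.
by split; apply: exprz_absz_eq1.
Qed.

Lemma torsion_monomial_periodic B z : B \is a GRing.unit -> in_torus z -> torsion z ->
  exists2 k, (0 < k)%N & monomial (B ^+ k) z = z.
Proof.
move=> B_unit z_tor [m m_gt0 [z1m z2m]].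
have [i [j [lt_ij mod_ij]]] := exists_exprn_eq_mod B m_gt0.
exists (j - i)%N; first by rewrite subn_gt0.
apply: (monomial_inj (unitrX i B_unit)) => //; first exact: in_torus_monomial.
rewrite -monomialM // -exprD subnKC 1?ltnW //.
by apply: (monomial_eq_mod _ z1m z2m) => // a b; rewrite mod_ij.
Qed.
End Torsion.

Definition unity_root_free (M : 'M[int]_2) :=
  forall N, (0 < N)%N -> \det (M ^+ N - 1) != 0.

Section Periodic.
Variables (K : fieldType) (f : torus_aut K).

Lemma Per_tmul_torsion p z : Per f p -> in_torus z -> torsion z -> Per f (tmul p z).
Proof.
move=> [p_tor [n [n_gt0 fn_p]]] z_tor z_tors.
have [k k_gt0 Bk_z] := torsion_monomial_periodic (unitrX n (ta_mat_unit f)) z_tor z_tors.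
split; first exact: in_torus_tmul.
exists (n * k)%N; split; first by rewrite muln_gt0 n_gt0.
have [c _ iterE] := iter_ta_fun f (n * k).
rewrite iterE; last exact: in_torus_tmul.
by rewrite monomial_tmul tmulA -iterE // exprM Bk_z mulnC iterM iter_fix.
Qed.

Lemma Per_tdiv_torsion p q :
  unity_root_free (ta_mat f) -> Per f p -> Per f q -> torsion (tdiv q p).
Proof.
move=> free [p_tor [n [n_gt0 fn_p]]] [q_tor [m [m_gt0 fm_q]]].
set N := (n * m)%N.
have fN_p : iter N (ta_fun f) p = p by rewrite /N mulnC iterM iter_fix.
have fN_q : iter N (ta_fun f) q = q by rewrite /N iterM iter_fix.
have [c _ iterE] := iter_ta_fun f N.
have z_tor : in_torus (tdiv q p) by exact: in_torus_tdiv.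
apply: (monomial_fixed_torsion z_tor (free N _)); first by rewrite muln_gt0 n_gt0.
apply: (tmulI p_tor); rewrite ![tmul _ p]tmulC tdivK // -[RHS]fN_q.
rewrite -[in RHS](tdivK q p_tor) iterE; last exact: in_torus_tmul.
by rewrite monomial_tmul tmulA -iterE // fN_p.
Qed.

Lemma PerE p : unity_root_free (ta_mat f) -> Per f p ->
  forall q, Per f q <-> in_torus q /\ torsion (tdiv q p).
Proof.
move=> free fp q; split=> [fq | [q_tor q_tors]].
  by split; [case: fq | exact: Per_tdiv_torsion].
rewrite -(tdivK q (proj1 fp)); apply: Per_tmul_torsion => //.
exact: in_torus_tdiv (proj1 fp).
Qed.
End Periodic.

Section ClosedField.
Variable K : closedFieldType.

Lemma closed_exprn_root (n : nat) (c : K) : (0 < n)%N -> c != 0 ->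
  exists2 x : K, x != 0 & x ^+ n = c.
Proof.
move=> n_gt0 c_neq0.
have /closed_rootP [x] : size ('X^n - c%:P) != 1 by rewrite size_XnsubC // eqSS -lt0n.
rewrite rootE !hornerE subr_eq0 => /eqP xn_c; exists x => //.
by apply: contra_neq c_neq0 => x0; rewrite -xn_c x0 expr0n eqn0Ngt n_gt0.
Qed.

Lemma closed_exprz_root (D : int) (c : K) : D != 0 -> c != 0 ->
  exists2 y : K, y != 0 & y ^ D = c.
Proof.
case: D => n D_neq0 c_neq0.
  by apply: closed_exprn_root; rewrite // lt0n.
have [y y_neq0 yn_c] := closed_exprn_root (ltn0Sn n) (invr_neq0 c_neq0).
by exists y => //; rewrite /exprz yn_c invrK.
Qed.

Lemma ta_fun_fixed_point (f : torus_aut K) : \det (ta_mat f - 1) != 0 ->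
  exists2 p, in_torus p & ta_fun f p = p.
Proof.
move=> det_neq0; set A := ta_mat f - 1.
have [y1 y1_neq0 y1E] := closed_exprz_root det_neq0 (invr_neq0 (ta_alpha_neq0 f)).
have [y2 y2_neq0 y2E] := closed_exprz_root det_neq0 (invr_neq0 (ta_beta_neq0 f)).
have y_tor : in_torus (y1, y2) by [].
exists (monomial (\adj A) (y1, y2)); first exact: in_torus_monomial.
rewrite ta_funE -monomialM // -[ta_mat f](subrK 1) mulrDl mul1r -mulmxE mul_mx_adj.
rewrite monomialD // monomial_scalar /= y1E y2E tmulA.
by rewrite /tmul /= !mulfV ?ta_alpha_neq0 ?ta_beta_neq0 // !mul1r.
Qed.

Lemma Per_exists (f : torus_aut K) : unity_root_free (ta_mat f) -> exists p, Per f p.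
Proof.
move=> free; have [|p p_tor fp] := @ta_fun_fixed_point f.
  by rewrite -[ta_mat f]expr1; exact: free.
by exists p; split => //; exists 1%N.
Qed.
End ClosedField.

Lemma loxodromic_unity_root_free (K : fieldType) (f : torus_aut K) :
  loxodromic f -> unity_root_free (ta_mat f).
Proof.
move=> lox N N_gt0; apply/negP => /eqP det0.
have [k k_gt0 [E MNk E2]] := unipotent_power_mx22 (unitrX N (ta_mat_unit f)) det0.
have Nk_gt0 : (0 < N * k)%N by rewrite muln_gt0 N_gt0.
have [C growth] := mx_norm1_unipotent_power_growth Nk_gt0 (etrans (exprM _ _ _) MNk) E2.
apply: (Rbar_le_not_lt _ _ _ lox); apply: (Lim_seq_root_le1 (C := C)) => m m_gt0.
by rewrite deg_iterE; exact: growth.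
Qed.

Theorem proposition8p1 (K : closedFieldType) (f g : torus_aut K) :
  loxodromic f -> loxodromic g ->
  ((exists p : K * K, Per f p /\ Per g p) <-> (forall p : K * K, Per f p <-> Per g p)).
Proof.
move=> /loxodromic_unity_root_free free_f /loxodromic_unity_root_free free_g; split.
  by move=> [p [fp gp]] q; rewrite (PerE free_f fp) (PerE free_g gp).
move=> Per_eq; have [p fp] := Per_exists free_f.
by exists p; split; last rewrite -Per_eq.
Qed.
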